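(* Let $H$ be a real Hilbert space and $\{C_\alpha\}_{\alpha\in\Omega}$ ($|\Omega|\ge2$) a family of closed convex subsets of $H$ with nonempty intersection $C=\bigcap_{\alpha\in\Omega}C_\alpha$. Let $\{t_n\}\subset[0,1]$ be such that there exist $\delta>0$ and $K\in\mathbb N$ with the property that for every $n\in\mathbb N$ at least one of $t_n,t_{n+1},\dots,t_{n+K}$ is greater than $\delta$. Then for every starting element $x_0\in H$, every sequence $\{x_n\}$ of remote projections onto $\{C_\alpha\}$ with weakness parameters $\{t_n\}$ converges weakly to some point of $C$.
   Context: $P_\alpha$ denotes the metric projection onto $C_\alpha$. A sequence of remote projections with weakness parameters $t_n\in[0,1]$ starting at $x_0$ is defined by $x_{n+1}=P_{\alpha(n)}x_n$, where $\alpha(n)\in\Omega$ is any index with $\mathrm{dist}(x_n,C_{\alpha(n)})\ge t_n\sup_{\alpha}\mathrm{dist}(x_n,C_\alpha)$; if $t_n=1$ for at least one $n$, it is additionally required that $\max_\alpha\mathrm{dist}(x,C_\alpha)$ is attained for every $x\in H$. *)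

From HB Require Import structures.
From mathcomp Require Import all_boot all_order all_algebra.
From mathcomp Require Import all_classical all_reals all_analysis.
Set Implicit Arguments. Unset Strict Implicit. Unset Printing Implicit Defensive.
Import Order.TTheory GRing.Theory Num.Theory.
Import numFieldNormedType.Exports.
Local Open Scope classical_set_scope.
Local Open Scope ring_scope.

(* A real Hilbert space is a complete normed space over R whose norm is
   induced by an inner product [inner]. *)
Definition is_inner_product (R : realType) (H : normedModType R)
  (inner : H -> H -> R) : Prop :=
  [/\ forall x y, inner x y = inner y x,
      forall (a : R) x y z, inner (a *: x + y) z = a * inner x z + inner y z
    & forall x, inner x x = `|x| ^+ 2].

Definition convex_set_H (R : realType) (H : normedModType R) (A : set H) : Prop :=
  forall x y (l : R), A x -> A y -> 0 <= l <= 1 -> A (l *: x + (1 - l) *: y).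

Definition dist_set (R : realType) (H : normedModType R) (x : H) (A : set H) : R :=
  inf [set `|x - a| | a in A].

Definition is_metric_proj (R : realType) (H : normedModType R)
  (A : set H) (x p : H) : Prop :=
  A p /\ forall a, A a -> `|x - p| <= `|x - a|.

Definition sup_dist (R : realType) (H : normedModType R) (Omega : Type)
  (C : Omega -> set H) (x : H) : R :=
  sup (range (fun b => dist_set x (C b))).

Definition remote_projections (R : realType) (H : normedModType R)
  (Omega : Type) (C : Omega -> set H) (t : nat -> R) (x : nat -> H) : Prop :=
  ((exists n, t n = 1) ->
     forall y : H, exists a : Omega, forall b, dist_set y (C b) <= dist_set y (C a)) /\
  exists alpha : nat -> Omega, forall n,
    t n * sup_dist C (x n) <= dist_set (x n) (C (alpha n)) /\
    is_metric_proj (C (alpha n)) (x n) (x n.+1).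

Definition weak_cvg (R : realType) (H : normedModType R)
  (inner : H -> H -> R) (x : nat -> H) (p : H) : Prop :=
  forall y : H, (fun n => inner (x n) y) @ \oo --> inner p y.

From HB Require Import structures.
From mathcomp Require Import all_boot all_order all_algebra.
From mathcomp Require Import all_classical all_reals all_analysis.
From mathcomp Require Import ring lra.
Import Order.TTheory GRing.Theory Num.Theory.
Import numFieldNormedType.Exports.
Local Open Scope classical_set_scope.
Local Open Scope ring_scope.
Set Implicit Arguments. Unset Strict Implicit. Unset Printing Implicit Defensive.

(* Each remote projection is Fejer monotone with respect to C: for c in C,
   |x_(n+1) - c|^2 <= |x_n - c|^2 - |x_n - x_(n+1)|^2, so the steps tend to 0.
   A step taken with t_m > delta dominates delta * dist(x_m, C_b) for every b,
   and such an m occurs in every window [n, n + K]; hence dist(x_n, C_b) -> 0.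
   Weak convergence then follows from an Opial-type argument with asymptotic
   centres, which avoids weak compactness: the minimiser of
   c |-> limsup |y_n - c|^2 (it exists by uniform convexity) lies in every C_b
   for every subsequence y of x, and comparing the centre of x with those of
   its subsequences shows that x converges weakly to its centre. *)

Lemma near_subseq (P : nat -> Prop) (psi : nat -> nat) :
  (forall k, (k <= psi k)%N) ->
  (\forall n \near \oo, P n) -> \forall k \near \oo, P (psi k).
Proof. by move=> hpsi [N _ hN]; exists N => // k /= hk; apply/hN/(leq_trans hk). Qed.

Lemma subseq_not_near (P : nat -> Prop) : ~ (\forall n \near \oo, P n) ->
  exists psi : nat -> nat, (forall k, (k <= psi k)%N) /\ forall k, ~ P (psi k).
Proof.
move=> notP.
have hfreq N : exists n, (N <= n)%N /\ ~ P n.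
  apply: contrapT => hN; apply: notP; exists N => // n /= hn.
  by apply: contrapT => nPn; apply: hN; exists n.
by have [psi hpsi] := choice hfreq; exists psi; split => k; case: (hpsi k).
Qed.

Section LimsupSeq.
Variable R : realType.
Implicit Types (u v w : nat -> R) (psi : nat -> nat).

Definition bounded_seq u := exists M, forall k, `|u k| <= M.

Definition limsup_seq u : R := inf [set b | \forall k \near \oo, u k <= b].

Lemma has_inf_limsup_seq u :
  bounded_seq u -> has_inf [set b | \forall k \near \oo, u k <= b].
Proof.
move=> [M hM]; split.
  by exists M; apply: nearW => k; exact: le_trans (ler_norm _) (hM k).
exists (- M) => b [N _ hN]; apply: le_trans (hN N (leqnn N)).
by move: (hM N); rewrite ler_norml => /andP[].
Qed.

Lemma limsup_seq_le u b :
  bounded_seq u -> (\forall k \near \oo, u k <= b) -> limsup_seq u <= b.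
Proof. by move=> /has_inf_limsup_seq [_ hlb] ub; apply: ge_inf. Qed.

Lemma near_le_limsup_seq u e :
  bounded_seq u -> 0 < e -> \forall k \near \oo, u k <= limsup_seq u + e.
Proof.
move=> /has_inf_limsup_seq hinf e0; have [b ub ltb] := inf_adherent e0 hinf.
by apply: filterS ub => k /le_trans; apply; apply: ltW.
Qed.

Lemma limsup_seq_ge0 u :
  bounded_seq u -> (forall k, 0 <= u k) -> 0 <= limsup_seq u.
Proof.
move=> /has_inf_limsup_seq [ne _] u0; apply: lb_le_inf ne _ => b [N _ hN].
exact: le_trans (u0 N) (hN N (leqnn N)).
Qed.

Lemma le_limsup_seq_comb u v w (a b c : R) :
  bounded_seq u -> bounded_seq v -> bounded_seq w -> 0 <= a -> 0 <= b ->
  (\forall k \near \oo, u k <= a * v k + b * w k + c) ->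
  limsup_seq u <= a * limsup_seq v + b * limsup_seq w + c.
Proof.
move=> bu bv bw a0 b0 hle; apply/ler_addgt0Pr => e e0.
pose q := e / (a + b + 1).
have q0 : 0 < q by rewrite divr_gt0 //; lra.
have qe : q * (a + b + 1) = e by rewrite divfK // gt_eqF //; lra.
apply: limsup_seq_le => //.
apply: filterS3 hle (near_le_limsup_seq bv q0) (near_le_limsup_seq bw q0).
move=> k hk hv hw.
have : a * v k <= a * (limsup_seq v + q) by rewrite ler_wpM2l.
have : b * w k <= b * (limsup_seq w + q) by rewrite ler_wpM2l.
nra.
Qed.

Lemma le_limsup_seq_shift u v (c : R) :
  bounded_seq u -> bounded_seq v -> (\forall k \near \oo, u k <= v k + c) ->
  limsup_seq u <= limsup_seq v + c.
Proof.
move=> bu bv hle; have := le_limsup_seq_comb (c := c) bu bv bv ler01 (lexx 0).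
rewrite mul1r mul0r addr0; apply; apply: filterS hle => k.
by rewrite mul1r mul0r addr0.
Qed.

Lemma bounded_seq_comp u psi : bounded_seq u -> bounded_seq (u \o psi).
Proof. by move=> [M hM]; exists M => k; exact: hM. Qed.

Lemma limsup_seq_subseq_le u psi : bounded_seq u ->
  (forall k, (k <= psi k)%N) -> limsup_seq (u \o psi) <= limsup_seq u.
Proof.
move=> bu hpsi; apply/ler_addgt0Pr => e e0.
apply: limsup_seq_le; first exact: bounded_seq_comp.
exact: near_subseq hpsi (near_le_limsup_seq bu e0).
Qed.

Lemma limsup_seq_subseq_ge u psi : bounded_seq u -> nonincreasing_seq u ->
  limsup_seq u <= limsup_seq (u \o psi).
Proof.
move=> bu u_noninc; apply/ler_addgt0Pr => e e0; apply: limsup_seq_le => //.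
have [N _ hN] := near_le_limsup_seq (bounded_seq_comp psi bu) e0.
exists (psi N) => // n /= hn; exact: le_trans (u_noninc _ _ hn) (hN N (leqnn N)).
Qed.

Lemma limsup_seq_le_nonincreasing u n : bounded_seq u -> nonincreasing_seq u ->
  limsup_seq u <= u n.
Proof.
by move=> bu u_noninc; apply: limsup_seq_le => //; exists n => // m /= /u_noninc.
Qed.

End LimsupSeq.

Section NormedSpace.
Variables (R : realType) (H : normedModType R).
Implicit Types (A : set H) (u v x y : H).

Lemma sqr_norm_le_near (M e : R) : 0 < e -> exists2 d, 0 < d &
  forall u v, `|u| <= M -> `|u - v| < d -> `|u| ^+ 2 <= `|v| ^+ 2 + e.
Proof.
move=> e0; have hM : 0 < 2 * `|M| + 1 by have := normr_ge0 M; lra.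
exists (e / (2 * `|M| + 1)); first by rewrite divr_gt0.
move=> u v uM uvd.
have de : e / (2 * `|M| + 1) * (2 * `|M| + 1) = e by rewrite divfK // gt_eqF.
have tri : `|u| <= `|u - v| + `|v| by rewrite -{1}(subrK v u) ler_normD.
have := ler_norm M; have := normr_ge0 v; have := normr_ge0 u.
move: de uM uvd tri; set d := e / _; set a := `|u|; set b := `|v|.
move=> de uM uvd tri a0 b0 Mn.
have d0 : 0 < d by rewrite divr_gt0.
case: (leP a b) => [ab|ba]; first by rewrite !expr2; nra.
have : (a - b) * (a + b) <= d * (2 * `|M|) by apply: ler_pM; lra.
rewrite !expr2; nra.
Qed.

Lemma dist_set_has_inf A x : A !=set0 -> has_inf [set `|x - a| | a in A].
Proof. by move=> [a Aa]; split; [exists `|x - a|, a | exists 0 => _ [c _ <-]]. Qed.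

Lemma dist_set_le A x a : A a -> dist_set x A <= `|x - a|.
Proof.
by move=> Aa; apply: (ge_inf (dist_set_has_inf x (ex_intro _ a Aa)).2); exists a.
Qed.

Lemma dist_set_ge0 A x : A !=set0 -> 0 <= dist_set x A.
Proof.
by move=> nA; apply: lb_le_inf (dist_set_has_inf x nA).1 _ => _ [c _ <-].
Qed.

Lemma dist_set_adherent A x e : A !=set0 -> 0 < e ->
  exists2 a, A a & `|x - a| < dist_set x A + e.
Proof.
move=> nA e0; have [_ [a Aa <-] ?] := inf_adherent e0 (dist_set_has_inf x nA).
by exists a.
Qed.

Lemma dist_set_lipschitz A x y : A !=set0 ->
  dist_set x A <= `|x - y| + dist_set y A.
Proof.
move=> nA; apply/ler_addgt0Pr => e e0.
have [a Aa ha] := dist_set_adherent y nA e0.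
by apply: le_trans (dist_set_le x Aa) _; have := ler_distD y x a; lra.
Qed.

Lemma norm_sub_shift_le (s : nat -> H) (eta : R) n k :
  (forall i, (n <= i)%N -> `|s i - s i.+1| <= eta) ->
  `|s n - s (n + k)%N| <= k%:R * eta.
Proof.
move=> steps; elim: k => [|k ih]; first by rewrite addn0 subrr normr0 mul0r.
apply: le_trans (ler_distD (s (n + k)%N) _ _) _.
by rewrite addnS -natr1 mulrDl mul1r lerD // steps // leq_addr.
Qed.

Lemma bounded_seq_sqdist (w : nat -> H) (M : R) c : (forall k, `|w k| <= M) ->
  bounded_seq (fun k => `|w k - c| ^+ 2).
Proof.
move=> wM; have M0 : 0 <= M := le_trans (normr_ge0 _) (wM 0%N).
exists ((M + `|c|) ^+ 2) => k.
rewrite ger0_norm ?sqr_ge0 // ler_pXn2r ?nnegrE ?addr_ge0 //.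
by apply: le_trans (ler_normB _ _) _; rewrite lerD2r.
Qed.

End NormedSpace.

Section InnerProduct.
Variables (R : realType) (H : normedModType R) (inner : H -> H -> R).
Hypothesis inner_prod : is_inner_product inner.
Implicit Types (A : set H) (u v w x y z : H).

Lemma innerC u v : inner u v = inner v u.
Proof. by case: inner_prod. Qed.

Lemma inner_self u : inner u u = `|u| ^+ 2.
Proof. by case: inner_prod. Qed.

Lemma innerZDl (a : R) u v w : inner (a *: u + v) w = a * inner u w + inner v w.
Proof. by case: inner_prod. Qed.

Lemma innerDl u v w : inner (u + v) w = inner u w + inner v w.
Proof. by rewrite -{1}(scale1r u) innerZDl mul1r. Qed.

Lemma innerZl (a : R) u w : inner (a *: u) w = a * inner u w.
Proof.
have inner0l : inner 0 w = 0 by have := innerDl 0 0 w; rewrite addr0; lra.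
by have := innerZDl a u 0 w; rewrite addr0 inner0l addr0.
Qed.

Lemma innerNl u w : inner (- u) w = - inner u w.
Proof. by rewrite -scaleN1r innerZl mulN1r. Qed.

Lemma innerBl u v w : inner (u - v) w = inner u w - inner v w.
Proof. by rewrite innerDl innerNl. Qed.

Lemma innerDr u v w : inner w (u + v) = inner w u + inner w v.
Proof. by rewrite innerC innerDl !(innerC w). Qed.

Lemma innerZr (a : R) u w : inner w (a *: u) = a * inner w u.
Proof. by rewrite innerC innerZl innerC. Qed.

Lemma innerNr u w : inner w (- u) = - inner w u.
Proof. by rewrite innerC innerNl innerC. Qed.

Lemma sqr_normD u v : `|u + v| ^+ 2 = `|u| ^+ 2 + 2 * inner u v + `|v| ^+ 2.
Proof. by rewrite -!inner_self innerDl !innerDr (innerC v u); ring. Qed.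

Lemma sqr_normB u v : `|u - v| ^+ 2 = `|u| ^+ 2 - 2 * inner u v + `|v| ^+ 2.
Proof. by rewrite sqr_normD innerNr normrN; ring. Qed.

Lemma sqr_normBZ u v (s : R) : 0 <= s ->
  `|u - s *: v| ^+ 2 = `|u| ^+ 2 - 2 * s * inner u v + s ^+ 2 * `|v| ^+ 2.
Proof. by move=> s0; rewrite sqr_normB innerZr normrZ ger0_norm // exprMn; ring. Qed.

Lemma parallelogram_midpoint w u v : `|w - 2^-1 *: (u + v)| ^+ 2 =
  (`|w - u| ^+ 2 + `|w - v| ^+ 2) / 2 - `|u - v| ^+ 2 / 4.
Proof.
rewrite !sqr_normB normrZ ger0_norm ?invr_ge0 ?ler0n // exprMn sqr_normD.
by rewrite innerZr innerDr; field.
Qed.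

Lemma inner_le_young u v (mu : R) : 0 < mu ->
  2 * inner u v <= mu * `|v| ^+ 2 + `|u| ^+ 2 / mu.
Proof.
move=> mu0; have := sqr_ge0 `|mu *: v - u|.
rewrite sqr_normB normrZ gtr0_norm // innerZl (innerC v u).
have : `|u| ^+ 2 / mu * mu = `|u| ^+ 2 by rewrite divfK ?gt_eqF.
set q := `|u| ^+ 2 / mu; rewrite !expr2; nra.
Qed.

Lemma convex_midpoint A u v : convex_set_H A -> A u -> A v -> A (2^-1 *: (u + v)).
Proof.
move=> cA Au Av; have := cA u v 2^-1 Au Av.
have -> : 1 - 2^-1 = 2^-1 :> R by field.
by rewrite scalerDr; apply; rewrite invr_ge0 ler0n /= invf_le1 ?ler1n.
Qed.

Lemma metric_proj_variational A x p c : convex_set_H A -> is_metric_proj A x p ->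
  A c -> inner (x - p) (c - p) <= 0.
Proof.
move=> cA [Ap p_min] Ac; rewrite leNgt; apply/negP => X0.
set X := inner (x - p) (c - p) in X0; set D := `|c - p| ^+ 2.
have D0 : 0 <= D by exact: sqr_ge0.
(* otherwise p + l (c - p), a point of A, would be strictly closer to x *)
pose l := X / (D + X).
have l0 : 0 < l by rewrite divr_gt0 //; lra.
have hl : l * (D + X) = X by rewrite divfK //; apply/eqP; lra.
have l1 : l <= 1 by nra.
have Aq := cA c p l Ac Ap (ltac:(by rewrite (ltW l0) l1)).
have := p_min _ Aq; rewrite -(ler_pXn2r (n := 2)) ?nnegrE //.
have -> : x - (l *: c + (1 - l) *: p) = (x - p) - l *: (c - p).
  rewrite scalerBl scale1r scalerBr !opprD !opprK !addrA.
  by congr (_ + _); rewrite addrAC.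
rewrite sqr_normBZ ?(ltW l0) // -/X -/D => h.
have : l * (2 * X) <= l * (l * D) by rewrite expr2 in h; nra.
rewrite ler_pM2l //; nra.
Qed.

Lemma metric_proj_fejer A x p c : convex_set_H A -> is_metric_proj A x p -> A c ->
  `|p - c| ^+ 2 <= `|x - c| ^+ 2 - `|x - p| ^+ 2.
Proof.
move=> cA hp Ac; have := metric_proj_variational cA hp Ac.
have -> : x - c = (x - p) - (c - p) by rewrite opprB addrA subrK.
have -> : p - c = - (c - p) by rewrite opprB.
rewrite sqr_normB normrN; lra.
Qed.

Lemma sqr_norm_sub_proj_le A x b p c : convex_set_H A -> is_metric_proj A b p ->
  A c -> `|x - p| ^+ 2 <= `|x - b| ^+ 2 - `|b - p| ^+ 2 / 2 + 2 * `|x - c| ^+ 2.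
Proof.
move=> cA hp Ac; have var := metric_proj_variational cA hp Ac.
have half_gt0 : 0 < 2^-1 :> R by rewrite invr_gt0.
have := inner_le_young (x - c) (b - p) half_gt0; rewrite invrK => young.
have split_b : `|x - b| ^+ 2 =
    `|x - p| ^+ 2 - 2 * inner (x - p) (b - p) + `|b - p| ^+ 2.
  by rewrite -sqr_normB opprB addrA subrK.
have split_c : inner (x - p) (b - p) = inner (x - c) (b - p) + inner (b - p) (c - p).
  by rewrite (innerC (b - p)) -innerDl addrA subrK.
lra.
Qed.

Lemma weak_cvg_of_near_inner_le (x : nat -> H) a :
  (forall y e, 0 < e -> \forall n \near \oo, inner (x n - a) y <= e) ->
  weak_cvg inner x a.
Proof.
move=> x_a y; apply/cvgrPdist_le => e e0.
apply: filterS2 (x_a y e e0) (x_a (- y) e e0) => n.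
rewrite innerNr !innerBl ler_norml => ? ?; apply/andP; split; lra.
Qed.

End InnerProduct.

Section CompleteSpace.
Variables (R : realType) (H : completeNormedModType R).
Implicit Types (S A : set H) (F : H -> R).

Lemma uniformly_convex_minimizer S F : closed S -> S !=set0 ->
  (forall u v, S u -> S v -> S (2^-1 *: (u + v))) ->
  (forall c, S c -> 0 <= F c) ->
  (forall u v, S u -> S v ->
     F (2^-1 *: (u + v)) <= (F u + F v) / 2 - `|u - v| ^+ 2 / 4) ->
  (forall b, S b -> forall e, 0 < e -> exists2 d, 0 < d &
     forall c, S c -> `|b - c| < d -> F b <= F c + e) ->
  exists2 b, S b & forall c, S c -> F b <= F c.
Proof.
move=> clS [s0 Ss0] Smid F0 Fmid Flsc.
have hinf : has_inf (F @` S).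
  by split; [exists (F s0), s0 | exists 0 => _ [c Sc <-]; exact: F0].
set m := inf (F @` S).
have m_le c : S c -> m <= F c by move=> Sc; apply: (ge_inf hinf.2); exists c.
have near_m j : exists c, S c /\ F c < m + j.+1%:R^-1.
  have jp : 0 < j.+1%:R^-1 :> R by rewrite invr_gt0 ltr0n.
  by have [_ [c Sc <-] ?] := inf_adherent jp hinf; exists c.
have [cs hcs] := choice near_m.
(* the midpoint inequality makes every minimizing sequence Cauchy *)
have cs_cauchy j k :
    `|cs j - cs k| ^+ 2 < 2 * j.+1%:R^-1 + 2 * k.+1%:R^-1.
  have := Fmid _ _ (hcs j).1 (hcs k).1.
  have := m_le _ (Smid _ _ (hcs j).1 (hcs k).1).
  have := (hcs j).2; have := (hcs k).2.
  by move: (j.+1%:R^-1) (k.+1%:R^-1) => aj ak; lra.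
have cs_cvg : cvgn cs.
  apply: cauchy_cvg; apply: cauchy_exP => e e0.
  have e0' : 0 < e ^+ 2 / 4 by rewrite divr_gt0 ?exprn_gt0.
  have [N _ hN] := near_infty_natSinv_lt (PosNum e0').
  exists (cs N); exists N => // n /= Nn; rewrite -ball_normE /ball_ /=.
  rewrite -(ltr_pXn2r (n := 2)) ?nnegrE ?(ltW e0) //.
  have := cs_cauchy N n; have := hN N (leqnn N); have := hN n Nn; simpl.
  by move: (N.+1%:R^-1) (n.+1%:R^-1) => aN an; lra.
set b := lim (cs @ \oo).
have Sb : S b.
  by apply: closed_cvg clS _ _ cs_cvg; apply: nearW => n; exact: (hcs n).1.
exists b => // c Sc; apply: le_trans (m_le _ Sc).
apply/ler_addgt0Pr => e e0.
have e2 : 0 < e / 2 by rewrite divr_gt0.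
have [d d0 hd] := Flsc _ Sb _ e2.
have : \forall n \near \oo, `|b - cs n| < d /\ n.+1%:R^-1 < e / 2.
  apply: filterI; first exact: (cvgrPdist_lt _ _).1 cs_cvg _ d0.
  exact: near_infty_natSinv_lt (PosNum e2).
move=> [N _ /(_ N (leqnn N)) [bN small]].
have := hd _ (hcs N).1 bN; have := (hcs N).2; move: small.
by move: (N.+1%:R^-1) => aN; lra.
Qed.

Variables (inner : H -> H -> R) (inner_prod : is_inner_product inner).

Lemma metric_proj_exists A b : closed A -> convex_set_H A -> A !=set0 ->
  exists p, is_metric_proj A b p.
Proof.
move=> clA cA nA.
have [p Ap p_min] : exists2 p, A p & forall c, A c -> `|b - p| ^+ 2 <= `|b - c| ^+ 2.
  apply: uniformly_convex_minimizer => //.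
  - by move=> u v; exact: convex_midpoint.
  - by move=> u v _ _; rewrite (parallelogram_midpoint inner_prod).
  move=> q Aq e e0; have [d d0 hd] := sqr_norm_le_near H `|b - q| e0.
  exists d => // c Ac qc; apply: hd => //.
  by rewrite opprB addrC addrA subrK distrC.
by exists p; split => // c /p_min; rewrite ler_pXn2r ?nnegrE.
Qed.

End CompleteSpace.

Section AsymptoticCenter.
Variables (R : realType) (H : completeNormedModType R) (inner : H -> H -> R).
Hypothesis inner_prod : is_inner_product inner.
Implicit Types (w x : nat -> H) (A D : set H).

Definition asym_sqdist w c := limsup_seq (fun k => `|w k - c| ^+ 2).

Definition asym_center w b := forall c, asym_sqdist w b <= asym_sqdist w c.

Lemma asym_center_exists w (M : R) : (forall k, `|w k| <= M) ->
  exists b, asym_center w b.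
Proof.
move=> wM; have bd c := bounded_seq_sqdist c wM.
have [b _ hb] : exists2 b, setT b &
    forall c, setT c -> asym_sqdist w b <= asym_sqdist w c.
  apply: uniformly_convex_minimizer closedT (ex_intro _ 0 I) _ _ _ _ => //.
  - by move=> c _; apply: limsup_seq_ge0 (bd c) _ => k; apply: sqr_ge0.
  - move=> u v _ _.
    have half_ge0 : 0 <= 2^-1 :> R by rewrite invr_ge0.
    have near_mid : \forall k \near \oo, `|w k - 2^-1 *: (u + v)| ^+ 2 <=
        2^-1 * `|w k - u| ^+ 2 + 2^-1 * `|w k - v| ^+ 2 + - (`|u - v| ^+ 2 / 4).
      by apply: nearW => k; rewrite (parallelogram_midpoint inner_prod); lra.
    have := le_limsup_seq_comb (bd _) (bd u) (bd v) half_ge0 half_ge0 near_mid.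
    by rewrite /asym_sqdist; lra.
  move=> b _ e e0; have [d d0 hd] := sqr_norm_le_near H (M + `|b|) e0.
  exists d => // c _ bc; apply: le_limsup_seq_shift (bd b) (bd c) _.
  apply: nearW => k; apply: hd.
    by apply: le_trans (ler_normB _ _) _; rewrite lerD2r.
  by rewrite opprB addrC addrA subrK distrC.
by exists b => c; apply: hb.
Qed.

Lemma asym_center_mem w (M : R) A b :
  closed A -> convex_set_H A -> A !=set0 -> (forall k, `|w k| <= M) ->
  (forall e, 0 < e -> \forall k \near \oo, dist_set (w k) A <= e) ->
  asym_center w b -> A b.
Proof.
move=> clA cA nA wM wA hb; have bd c := bounded_seq_sqdist c wM.
have [p hp] := metric_proj_exists inner_prod b clA cA nA.
suff bp0 : `|b - p| ^+ 2 <= 0.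
  have : b - p == 0 by rewrite -normr_eq0 -sqrf_eq0 eq_le bp0 sqr_ge0.
  by rewrite subr_eq0 => /eqP ->; exact: hp.1.
apply/ler_addgt0Pr => e e0; rewrite add0r.
have e4 : 0 <= e / 4 by rewrite divr_ge0 // ltW.
pose r := Num.sqrt (e / 4) / 2.
have r0 : 0 < r by rewrite divr_gt0 // sqrtr_gt0 divr_gt0.
have near_p : \forall k \near \oo,
    `|w k - p| ^+ 2 <= `|w k - b| ^+ 2 + (- (`|b - p| ^+ 2 / 2) + e / 2).
  apply: filterS (wA r r0) => k wk.
  have [c Ac wc] := dist_set_adherent (w k) nA r0.
  have : `|w k - c| <= Num.sqrt (e / 4) by rewrite /r in wc wk; lra.
  rewrite -(ler_pXn2r (n := 2)) ?nnegrE ?sqrtr_ge0 // sqr_sqrtr // => wc2.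
  have := sqr_norm_sub_proj_le inner_prod (w k) cA hp Ac; lra.
have := le_limsup_seq_shift (bd p) (bd b) near_p.
by have := hb p; rewrite /asym_sqdist; lra.
Qed.

Lemma near_inner_le_asym_center D x (M : R) a :
  (forall k, `|x k| <= M) ->
  (forall c, D c -> nonincreasing_seq (fun n => `|x n - c| ^+ 2)) ->
  (forall psi, (forall k, (k <= psi k)%N) ->
     forall b, asym_center (x \o psi) b -> D b) ->
  asym_center x a -> forall y e, 0 < e -> \forall n \near \oo, inner (x n - a) y <= e.
Proof.
move=> xM fejer centers_in_D ha y e e0.
apply: contrapT => /subseq_not_near [psi [psi_ge not_le]].
pose w := x \o psi.
have wM k : `|w k| <= M by apply: xM.
have gt_e k : e < inner (w k - a) y by rewrite ltNge; apply/negP; exact: not_le.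
have [b hb] := asym_center_exists wM.
have Db := centers_in_D psi psi_ge b hb.
pose s := e / (`|y| ^+ 2 + 1).
have y0 : 0 <= `|y| ^+ 2 := sqr_ge0 _.
have s0 : 0 < s by rewrite divr_gt0 //; lra.
have sy : s * `|y| ^+ 2 <= e.
  rewrite mulrAC ler_pdivrMr; last by lra.
  by rewrite mulrDr mulr1 lerDl ltW.
have shift : asym_sqdist w (a + s *: y) <= asym_sqdist w a + - (s * e).
  apply: le_limsup_seq_shift (bounded_seq_sqdist _ wM) (bounded_seq_sqdist _ wM) _.
  apply: nearW => k.
  have -> : w k - (a + s *: y) = (w k - a) - s *: y by rewrite opprD addrA.
  rewrite (sqr_normBZ inner_prod) ?(ltW s0) //.
  have : s * e <= s * inner (w k - a) y by rewrite ler_pM2l // ltW.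
  have : s * (s * `|y| ^+ 2) <= s * e by rewrite ler_pM2l.
  by rewrite expr2 -mulrA; lra.
have wa_le_xa : asym_sqdist w a <= asym_sqdist x a.
  exact: limsup_seq_subseq_le (bounded_seq_sqdist _ xM) psi_ge.
have xb_le_wb : asym_sqdist x b <= asym_sqdist w b.
  exact: limsup_seq_subseq_ge psi (bounded_seq_sqdist _ xM) (fejer b Db).
(* With r, r_w the asymptotic radii of x and w:
   r_w(b) <= r_w(a + s y) <= r_w(a) - s e <= r(a) - s e <= r(b) - s e <= r_w(b) - s e,
   the last step because |x_n - b| is nonincreasing as b lies in D *)
have := ha b; have := hb (a + s *: y); have : 0 < s * e by rewrite mulr_gt0.
lra.
Qed.

Lemma fejer_monotone_weak_cvg D x (M : R) :
  (forall k, `|x k| <= M) ->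
  (forall c, D c -> nonincreasing_seq (fun n => `|x n - c| ^+ 2)) ->
  (forall psi, (forall k, (k <= psi k)%N) ->
     forall b, asym_center (x \o psi) b -> D b) ->
  exists a, D a /\ weak_cvg inner x a.
Proof.
move=> xM fejer centers_in_D; have [a ha] := asym_center_exists xM.
exists a; split; first exact: (centers_in_D id leqnn).
apply: (weak_cvg_of_near_inner_le inner_prod).
exact: near_inner_le_asym_center xM fejer centers_in_D ha.
Qed.

End AsymptoticCenter.

Section RemoteProjections.
Variables (R : realType) (H : normedModType R) (inner : H -> H -> R).
Hypothesis inner_prod : is_inner_product inner.
Variables (Omega : Type) (C : Omega -> set H) (z : H).
Hypotheses (convexC : forall a, convex_set_H (C a)) (Cz : forall a, C a z).
Variables (t : nat -> R) (x : nat -> H) (alpha : nat -> Omega).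
Hypothesis proj_step : forall n, is_metric_proj (C (alpha n)) (x n) (x n.+1).
Hypothesis remote_step : forall n, t n * sup_dist C (x n) <= dist_set (x n) (C (alpha n)).

Lemma nonempty_C a : C a !=set0.
Proof. by exists z. Qed.

Lemma remote_fejer c : (forall a, C a c) -> forall n,
  `|x n.+1 - c| ^+ 2 <= `|x n - c| ^+ 2 - `|x n - x n.+1| ^+ 2.
Proof. by move=> Cc n; apply: (metric_proj_fejer inner_prod) (proj_step n) (Cc _). Qed.

Lemma remote_sqdist_nonincreasing c : (forall a, C a c) ->
  nonincreasing_seq (fun n => `|x n - c| ^+ 2).
Proof.
move=> Cc; apply/nonincreasing_seqP => n.
by have := remote_fejer Cc n; have := sqr_ge0 `|x n - x n.+1|; lra.
Qed.

Lemma remote_bounded n : `|x n| <= `|x 0%N - z| + `|z|.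
Proof.
have : `|x n - z| <= `|x 0%N - z|.
  by rewrite -(ler_pXn2r (n := 2)) ?nnegrE //; apply: remote_sqdist_nonincreasing.
by have := ler_normD (x n - z) z; rewrite subrK; lra.
Qed.

Lemma remote_steps_vanish e : 0 < e -> \forall n \near \oo, `|x n - x n.+1| <= e.
Proof.
move=> e0; pose u n := `|x n - z| ^+ 2.
have bu : bounded_seq u := bounded_seq_sqdist z remote_bounded.
have u_noninc := remote_sqdist_nonincreasing Cz.
apply: filterS (near_le_limsup_seq bu (exprn_gt0 2 e0)) => n un.
rewrite -(ler_pXn2r (n := 2)) ?nnegrE ?(ltW e0) //.
have := limsup_seq_le_nonincreasing n.+1 bu u_noninc; have := remote_fejer Cz n.
by move: un; rewrite /u; lra.
Qed.

Lemma dist_set_le_sup_dist n b : dist_set (x n) (C b) <= sup_dist C (x n).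
Proof.
apply: sup_upper_bound; last by exists b.
split; first by exists (dist_set (x n) (C b)), b.
by exists `|x n - z| => _ [c _ <-]; apply: dist_set_le.
Qed.

Lemma dist_set_le_step (delta : R) n b : 0 < delta -> delta < t n ->
  delta * dist_set (x n) (C b) <= `|x n - x n.+1|.
Proof.
move=> delta0 delta_t; apply: le_trans _ (dist_set_le (x n) (proj_step n).1).
apply: le_trans _ (remote_step n).
have := dist_set_le_sup_dist n b; have := dist_set_ge0 (x n) (nonempty_C b); nra.
Qed.

Lemma remote_dist_vanish (delta : R) (K : nat) : 0 < delta ->
  (forall n, exists k, (k <= K)%N /\ delta < t (n + k)%N) ->
  forall b e, 0 < e -> \forall n \near \oo, dist_set (x n) (C b) <= e.
Proof.
move=> delta0 hK b e e0.
pose eta := e * delta / (K%:R * delta + 1).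
have K0 : 0 < K%:R * delta + 1 by have := ler0n R K; nra.
have eta0 : 0 < eta by rewrite divr_gt0 // mulr_gt0.
have eta_e : eta * (K%:R * delta + 1) = e * delta by rewrite divfK // gt_eqF.
have [N _ small] := remote_steps_vanish eta0.
exists N => // n /= Nn; have [k [kK delta_t]] := hK n.
have to_m : `|x n - x (n + k)%N| <= k%:R * eta.
  by apply: norm_sub_shift_le => i ni; apply/small/(leq_trans Nn).
have := dist_set_le_step b delta0 delta_t.
have := small (n + k)%N (leq_trans Nn (leq_addr _ _)).
have := dist_set_lipschitz (x n) (x (n + k)%N) (nonempty_C b).
have : k%:R * eta <= K%:R * eta by rewrite ler_pM2r // ler_nat.
rewrite -(ler_pM2l delta0); nra.
Qed.

End RemoteProjections.

Theorem theorem2 (R : realType) (H : completeNormedModType R)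
  (inner : H -> H -> R) (Omega : Type) (C : Omega -> set H) (t : nat -> R) :
  is_inner_product inner ->
  (exists a b : Omega, a <> b) ->
  (forall a, closed (C a) /\ convex_set_H (C a)) ->
  (exists z : H, forall a, C a z) ->
  (forall n, 0 <= t n <= 1) ->
  (exists (delta : R) (K : nat), 0 < delta /\
     forall n, exists k, (k <= K)%N /\ delta < t (n + k)%N) ->
  forall x : nat -> H, remote_projections C t x ->
  exists p : H, (forall a, C a p) /\ weak_cvg inner x p.
Proof.
move=> inner_prod _ hC [z Cz] _ [delta [K [delta0 hK]]] x [_ [alpha halpha]].
have convexC a := (hC a).2.
have proj_step n := (halpha n).2.
have remote_step n := (halpha n).1.
have xM := remote_bounded inner_prod convexC Cz proj_step.
apply: (fejer_monotone_weak_cvg inner_prod xM).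
  by move=> c Cc; exact: (remote_sqdist_nonincreasing inner_prod convexC proj_step Cc).
move=> psi psi_ge b hb a.
apply: (asym_center_mem inner_prod (hC a).1 (convexC a) (ex_intro _ z (Cz a)) _ _ hb).
  by move=> k; apply: xM.
move=> e e0; apply: near_subseq psi_ge
  (remote_dist_vanish inner_prod convexC Cz proj_step remote_step delta0 hK a e0).
Qed.
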